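(* Let $\sigma_{01},\sigma_{12}>0$, $\sigma_{02}=\sigma_{01}+\sigma_{12}$, let $\Gamma_{ij}\ge0$ ($i,j=1,2$) with $\Gamma_{12}=\Gamma_{21}$, and let $M=(M_1,M_2)$ with $M_1,M_2>0$. Then every minimizing configuration $(m^k)_{k\ge1}$ for $\overline{e_0}(M)$ has only finitely many nontrivial components, i.e. there is $N<\infty$ such that $m^k=(0,0)$ for all but at most $N$ indices $k$, and hence $\overline{e_0}(M)=\sum_{k=1}^N e_0(m^k)$ after relabeling.
   Context: For $m=(m_1,m_2)$ with $m_1,m_2\ge0$ set $$e_0(m)=2\sigma_{01}\sqrt{\pi(m_1+m_2)}+2\sigma_{12}\sqrt{\pi m_2}+\sum_{i,j=1}^2\frac{\Gamma_{ij}m_im_j}{4\pi},$$ so $e_0(0,0)=0$. $\overline{e_0}(M)=\inf\{\sum_{k\ge1}e_0(m^k): m^k=(m_1^k,m_2^k),\ m_i^k\ge0,\ \sum_k m_i^k=M_i,\ i=1,2\}$. A minimizing configuration is an admissible sequence $(m^k)$ attaining this infimum; nontrivial components are those with $m^k\neq(0,0)$. *)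

From Stdlib Require Import Reals Lra.
Open Scope R_scope.

Definition e0 (s01 s12 G11 G12 G21 G22 : R) (m : R * R) : R :=
  let m1 := fst m in let m2 := snd m in
  2 * s01 * sqrt (PI * (m1 + m2)) + 2 * s12 * sqrt (PI * m2)
  + (G11 * m1 * m1 + G12 * m1 * m2 + G21 * m2 * m1 + G22 * m2 * m2) / (4 * PI).

(* Admissible sequences for M = (M1, M2): nonnegative components whose
   component series sum to M1 and M2 (indices k >= 1 are shifted to k >= 0). *)
Definition admissible (M1 M2 : R) (m : nat -> R * R) : Prop :=
  (forall k, 0 <= fst (m k) /\ 0 <= snd (m k)) /\
  infinite_sum (fun k => fst (m k)) M1 /\
  infinite_sum (fun k => snd (m k)) M2.

(* m is a minimizing configuration for ebar(M) with value s: it is admissible,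
   its energy series converges to s, and no admissible configuration has a
   (convergent) energy below s; since e0 >= 0, divergent energy series have
   value +oo, so s is exactly the infimum ebar(M). *)
Definition minimizing (s01 s12 G11 G12 G21 G22 M1 M2 : R)
  (m : nat -> R * R) (s : R) : Prop :=
  admissible M1 M2 m /\
  infinite_sum (fun k => e0 s01 s12 G11 G12 G21 G22 (m k)) s /\
  (forall m' s', admissible M1 M2 m' ->
     infinite_sum (fun k => e0 s01 s12 G11 G12 G21 G22 (m' k)) s' -> s <= s').

From Stdlib Require Import Reals Lra Lia Classical.
Open Scope R_scope.

(* If a minimizer had infinitely many nontrivial components, their masses
   would tend to 0, so two of them, a and b, could be chosen arbitrarily small.
   Merging b into a keeps the configuration admissible and, for small masses,
   strictly lowers the energy: the surface terms gain
   sqrt|a| + sqrt|b| - sqrt(|a| + |b|) >= sqrt|a| sqrt|b| / 2, while the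
   Gamma-terms grow by at most a multiple of |a| |b| = (sqrt|a| sqrt|b|)^2.
   This contradicts minimality. *)

Lemma infinite_sum_ext (f g : nat -> R) (l : R) :
  (forall k, f k = g k) -> infinite_sum f l -> infinite_sum g l.
Proof.
  intros Hfg Hf eps Heps; destruct (Hf eps Heps) as [N HN]; exists N; intros n Hn.
  rewrite <- (sum_eq f g n) by (intros; apply Hfg); exact (HN n Hn).
Qed.

Lemma infinite_sum_plus (f g : nat -> R) (a b : R) :
  infinite_sum f a -> infinite_sum g b -> infinite_sum (fun k => f k + g k) (a + b).
Proof.
  intros Hf Hg eps Heps.
  destruct (CV_plus _ _ _ _ Hf Hg eps Heps) as [N HN]; exists N; intros n Hn.
  rewrite sum_plus; exact (HN n Hn).
Qed.

Lemma sum_f_R0_stationary (f : nat -> R) (N : nat) :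
  (forall k, (N < k)%nat -> f k = 0) ->
  forall n, (N <= n)%nat -> sum_f_R0 f n = sum_f_R0 f N.
Proof.
  intros Hf n Hn; induction Hn as [|n Hn IH]; [reflexivity|].
  rewrite tech5, IH, (Hf (S n)) by lia; ring.
Qed.

Lemma infinite_sum_finite_support (f : nat -> R) (N : nat) :
  (forall k, (N < k)%nat -> f k = 0) -> infinite_sum f (sum_f_R0 f N).
Proof.
  intros Hf eps Heps; exists N; intros n Hn.
  rewrite (sum_f_R0_stationary f N Hf n Hn); unfold Rdist.
  rewrite Rminus_diag, Rabs_R0; exact Heps.
Qed.

Lemma infinite_sum_indicator (i : nat) (c : R) :
  infinite_sum (fun k => if Nat.eqb k i then c else 0) c.
Proof.
  set (f := fun k => if Nat.eqb k i then c else 0).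
  enough (Hsum : sum_f_R0 f i = c).
  { rewrite <- Hsum; apply infinite_sum_finite_support; intros k Hk; unfold f.
    destruct (Nat.eqb_spec k i); [lia | reflexivity]. }
  destruct i as [|i]; unfold f; simpl; [reflexivity|].
  rewrite Nat.eqb_refl, sum_eq_R0; [ring|].
  intros n Hn; destruct (Nat.eqb_spec n (S i)); [lia | reflexivity].
Qed.

Lemma infinite_sum_terms_cv0 (f : nat -> R) (l : R) : infinite_sum f l -> Un_cv f 0.
Proof.
  intros Hf eps Heps; destruct (Hf (eps / 2) ltac:(lra)) as [N HN].
  exists (S N); intros [|k] Hk; [lia|].
  pose proof (HN k ltac:(lia)) as A; pose proof (HN (S k) ltac:(lia)) as B.
  rewrite tech5 in B; unfold Rdist in *; rewrite Rminus_0_r.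
  revert A B; unfold Rabs; repeat destruct Rcase_abs; lra.
Qed.

Lemma Un_cv0_eventually_lt (u : nat -> R) (eps : R) :
  Un_cv u 0 -> 0 < eps -> exists K, forall k, (K <= k)%nat -> u k < eps.
Proof.
  intros Hu Heps; destruct (Hu eps Heps) as [K HK]; exists K; intros k Hk.
  specialize (HK k Hk); unfold Rdist in HK; rewrite Rminus_0_r in HK.
  exact (Rle_lt_trans _ _ _ (Rle_abs _) HK).
Qed.

Definition padd (a b : R * R) : R * R := (fst a + fst b, snd a + snd b).

Definition mass (a : R * R) : R := fst a + snd a.

Definition merge (m : nat -> R * R) (i j : nat) : nat -> R * R :=
  fun k => if Nat.eqb k i then padd (m i) (m j) else if Nat.eqb k j then (0, 0) else m k.

Lemma infinite_sum_merge (phi : R * R -> R) (m : nat -> R * R) (i j : nat) (l : R) :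
  i <> j -> infinite_sum (fun k => phi (m k)) l ->
  infinite_sum (fun k => phi (merge m i j k))
    (l + (phi (padd (m i) (m j)) - phi (m i)) + (phi (0, 0) - phi (m j))).
Proof.
  intros Hij Hm.
  apply (infinite_sum_ext (fun k => phi (m k)
    + (if Nat.eqb k i then phi (padd (m i) (m j)) - phi (m i) else 0)
    + (if Nat.eqb k j then phi (0, 0) - phi (m j) else 0))).
  - intros k; unfold merge.
    destruct (Nat.eqb_spec k i), (Nat.eqb_spec k j); subst; try lia; ring.
  - repeat apply infinite_sum_plus; auto using infinite_sum_indicator.
Qed.

Lemma admissible_merge (M1 M2 : R) (m : nat -> R * R) (i j : nat) :
  i <> j -> admissible M1 M2 m -> admissible M1 M2 (merge m i j).
Proof.
  intros Hij [Hnn [H1 H2]]; split; [|split].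
  - intros k; unfold merge.
    destruct (Nat.eqb k i); [|destruct (Nat.eqb k j)]; simpl.
    + pose proof (Hnn i); pose proof (Hnn j); lra.
    + lra.
    + apply Hnn.
  - replace M1 with (M1 + (fst (padd (m i) (m j)) - fst (m i)) + (fst (0, 0) - fst (m j)))
      by (simpl; ring).
    exact (infinite_sum_merge fst m i j M1 Hij H1).
  - replace M2 with (M2 + (snd (padd (m i) (m j)) - snd (m i)) + (snd (0, 0) - snd (m j)))
      by (simpl; ring).
    exact (infinite_sum_merge snd m i j M2 Hij H2).
Qed.

Lemma admissible_mass_cv0 (M1 M2 : R) (m : nat -> R * R) :
  admissible M1 M2 m -> Un_cv (fun k => mass (m k)) 0.
Proof.
  intros [_ [H1 H2]]; exact (infinite_sum_terms_cv0 _ _ (infinite_sum_plus _ _ _ _ H1 H2)).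
Qed.

Lemma mass_pos (a : R * R) : 0 <= fst a -> 0 <= snd a -> a <> (0, 0) -> 0 < mass a.
Proof.
  destruct a as [a1 a2]; unfold mass; simpl; intros H1 H2 Ha.
  destruct (Rle_or_lt (a1 + a2) 0) as [H|H]; [|exact H].
  exfalso; apply Ha; f_equal; lra.
Qed.

Lemma sqrt_add_le (u v : R) : 0 <= u -> 0 <= v -> sqrt (u + v) <= sqrt u + sqrt v.
Proof.
  intros Hu Hv; pose proof (sqrt_pos u); pose proof (sqrt_pos v).
  apply Rsqr_incr_0_var; [|lra]; unfold Rsqr.
  rewrite sqrt_sqrt by lra; pose proof (sqrt_sqrt u Hu); pose proof (sqrt_sqrt v Hv); nra.
Qed.

Lemma sqrt_add_gap (x y : R) : 0 <= x <= 1 -> 0 <= y <= 1 ->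
  sqrt x * sqrt y / 2 <= sqrt x + sqrt y - sqrt (x + y).
Proof.
  intros Hx Hy.
  pose proof (sqrt_sqrt x ltac:(lra)); pose proof (sqrt_sqrt y ltac:(lra)).
  pose proof (sqrt_sqrt (x + y) ltac:(lra)).
  pose proof (sqrt_pos x); pose proof (sqrt_pos y); pose proof (sqrt_pos (x + y)).
  pose proof (sqrt_add_le x y ltac:(lra) ltac:(lra)).
  set (p := sqrt x) in *; set (q := sqrt y) in *; set (r := sqrt (x + y)) in *.
  assert (Hrat : (p + q - r) * (p + q + r) = 2 * (p * q)) by nra.
  assert (p <= 1) by nra; assert (q <= 1) by nra; assert (r <= 2) by nra.
  nra.
Qed.

Lemma mul_sqrt_lt (G x y s : R) : 0 <= G -> 0 <= x -> 0 <= y ->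
  G * x < s -> G * y < s -> G * (sqrt x * sqrt y) < s.
Proof.
  intros HG Hx Hy Hxs Hys.
  assert (0 <= G * (sqrt x * sqrt y))
    by (apply Rmult_le_pos; [|apply Rmult_le_pos; apply sqrt_pos]; lra).
  pose proof (sqrt_sqrt x Hx) as Hxx; pose proof (sqrt_sqrt y Hy) as Hyy.
  set (p := sqrt x) in *; set (q := sqrt y) in *.
  assert (Hsq : G * (p * q) * (G * (p * q)) = G * x * (G * y))
    by (rewrite <- Hxx, <- Hyy; ring).
  assert (0 <= G * x) by (apply Rmult_le_pos; lra).
  assert (0 <= G * y) by (apply Rmult_le_pos; lra).
  nra.
Qed.

Definition interaction (G11 G12 G21 G22 : R) (a : R * R) : R :=
  G11 * fst a * fst a + G12 * fst a * snd a + G21 * snd a * fst a + G22 * snd a * snd a.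

Section Energy.

Variables s01 s12 G11 G12 G21 G22 : R.
Hypothesis hs01 : 0 < s01.
Hypothesis hs12 : 0 <= s12.
Hypotheses (hG11 : 0 <= G11) (hG12 : 0 <= G12) (hG21 : 0 <= G21) (hG22 : 0 <= G22).

Local Notation E := (e0 s01 s12 G11 G12 G21 G22).
Local Notation G := (G11 + G12 + G21 + G22).

Lemma e0_zero : E (0, 0) = 0.
Proof.
  unfold e0; simpl; rewrite Rplus_0_r, Rmult_0_r, sqrt_0.
  pose proof PI_RGT_0; field; lra.
Qed.

Lemma e0_split (a : R * R) :
  E a = 2 * s01 * sqrt (PI * mass a) + 2 * s12 * sqrt (PI * snd a)
        + interaction G11 G12 G21 G22 a / (4 * PI).
Proof. reflexivity. Qed.

Lemma interaction_padd_le (a b : R * R) :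
  0 <= fst a -> 0 <= snd a -> 0 <= fst b -> 0 <= snd b ->
  interaction G11 G12 G21 G22 (padd a b)
    - interaction G11 G12 G21 G22 a - interaction G11 G12 G21 G22 b
  <= 2 * G * mass a * mass b.
Proof.
  destruct a as [a1 a2], b as [b1 b2]; unfold interaction, padd, mass; simpl.
  intros ha1 ha2 hb1 hb2.
  assert (0 <= G11 * (a1 * b2 + a2 * b1 + a2 * b2)) by (apply Rmult_le_pos; nra).
  assert (0 <= G12 * (2 * a1 * b1 + a1 * b2 + a2 * b1 + 2 * a2 * b2))
    by (apply Rmult_le_pos; nra).
  assert (0 <= G21 * (2 * a1 * b1 + a1 * b2 + a2 * b1 + 2 * a2 * b2))
    by (apply Rmult_le_pos; nra).
  assert (0 <= G22 * (a1 * b1 + a1 * b2 + a2 * b1)) by (apply Rmult_le_pos; nra).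
  nra.
Qed.

Lemma e0_padd_lt (a b : R * R) :
  0 <= fst a -> 0 <= snd a -> 0 <= fst b -> 0 <= snd b ->
  0 < mass a <= 1 -> 0 < mass b <= 1 -> G * mass a < s01 -> G * mass b < s01 ->
  E (padd a b) < E a + E b.
Proof.
  intros ha1 ha2 hb1 hb2 [hx hx1] [hy hy1] hGx hGy.
  rewrite !e0_split.
  pose proof PI_RGT_0 as Hpi; pose proof PI2_1 as Hpi1.
  assert (Hmass : mass (padd a b) = mass a + mass b) by (unfold mass, padd; simpl; ring).
  assert (Hsnd : sqrt (snd (padd a b)) <= sqrt (snd a) + sqrt (snd b))
    by (apply sqrt_add_le; assumption).
  pose proof (interaction_padd_le a b ha1 ha2 hb1 hb2) as Hint.
  rewrite Hmass, !(sqrt_mult_alt PI) by lra.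
  pose proof (sqrt_add_gap (mass a) (mass b) ltac:(lra) ltac:(lra)) as Hgap.
  assert (Hc : 1 <= sqrt PI) by (rewrite <- sqrt_1; apply sqrt_le_1_alt; lra).
  pose proof (sqrt_sqrt (mass a) ltac:(lra)) as Hp.
  pose proof (sqrt_sqrt (mass b) ltac:(lra)) as Hq.
  assert (0 < sqrt (mass a)) by (apply sqrt_lt_R0; lra).
  assert (0 < sqrt (mass b)) by (apply sqrt_lt_R0; lra).
  set (c := sqrt PI) in *; set (p := sqrt (mass a)) in *; set (q := sqrt (mass b)) in *.
  (* the surface gain is linear in [p * q], the interaction excess only quadratic *)
  assert (HGpq : G * (p * q) < s01) by (apply mul_sqrt_lt; lra).
  assert (Hexcess : 2 * G * mass a * mass b / (4 * PI) < s01 * c * (p * q)).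
  { apply (Rmult_lt_reg_r (4 * PI)); [lra|].
    unfold Rdiv; rewrite Rmult_assoc, Rinv_l, Rmult_1_r by lra.
    replace (2 * G * mass a * mass b) with (2 * (G * (p * q)) * (p * q))
      by (rewrite <- Hp, <- Hq; ring).
    assert (s01 <= s01 * (c * (2 * PI)))
      by (rewrite <- (Rmult_1_r s01) at 1; apply Rmult_le_compat_l; nra).
    assert (0 < p * q) by nra.
    assert (G * (p * q) * (p * q) < s01 * (c * (2 * PI)) * (p * q))
      by (apply Rmult_lt_compat_r; lra).
    lra. }
  assert (Hexc : (interaction G11 G12 G21 G22 (padd a b)
      - interaction G11 G12 G21 G22 a - interaction G11 G12 G21 G22 b) / (4 * PI)
      <= 2 * G * mass a * mass b / (4 * PI))
    by (apply Rmult_le_compat_r; [apply Rlt_le, Rinv_0_lt_compat; lra | exact Hint]).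
  assert (2 * s01 * c * (p * q / 2)
          <= 2 * s01 * c * (p + q - sqrt (mass a + mass b))) by (apply Rmult_le_compat_l; nra).
  assert (2 * s12 * c * sqrt (snd (padd a b))
          <= 2 * s12 * c * (sqrt (snd a) + sqrt (snd b))) by (apply Rmult_le_compat_l; nra).
  lra.
Qed.

Lemma minimizing_merge_ge (M1 M2 : R) (m : nat -> R * R) (s : R) (i j : nat) :
  minimizing s01 s12 G11 G12 G21 G22 M1 M2 m s -> i <> j ->
  E (m i) + E (m j) <= E (padd (m i) (m j)).
Proof.
  intros [Hadm [He Hmin]] Hij.
  pose proof (Hmin _ _ (admissible_merge M1 M2 m i j Hij Hadm)
                (infinite_sum_merge E m i j s Hij He)) as Hle.
  rewrite e0_zero in Hle; lra.
Qed.

Lemma minimizing_finite_support (M1 M2 : R) (m : nat -> R * R) (s : R) :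
  minimizing s01 s12 G11 G12 G21 G22 M1 M2 m s ->
  exists N, forall k, (N < k)%nat -> m k = (0, 0).
Proof.
  intros Hmin; pose proof (proj1 Hmin) as Hadm; pose proof (proj1 Hadm) as Hnn.
  apply NNPP; intros Hfin.
  assert (Hinf : forall N, exists k, (N < k)%nat /\ m k <> (0, 0)).
  { intros N; apply not_all_not_ex; intros HN; apply Hfin; exists N; intros k Hk.
    apply NNPP; intros Hmk; exact (HN k (conj Hk Hmk)). }
  pose proof (admissible_mass_cv0 M1 M2 m Hadm) as Hcv.
  destruct (Un_cv0_eventually_lt _ 1 Hcv Rlt_0_1) as [K1 HK1].
  destruct (Un_cv0_eventually_lt _ (s01 / (G + 1)) Hcv) as [K2 HK2].
  { apply Rdiv_lt_0_compat; lra. }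
  assert (Hsmall : forall k, (Nat.max K1 K2 <= k)%nat -> m k <> (0, 0) ->
            (0 < mass (m k) <= 1) /\ G * mass (m k) < s01).
  { intros k Hk Hmk.
    pose proof (mass_pos (m k) (proj1 (Hnn k)) (proj2 (Hnn k)) Hmk).
    pose proof (HK1 k ltac:(lia)) as H1; pose proof (HK2 k ltac:(lia)) as H2.
    assert (s01 / (G + 1) * (G + 1) = s01) by (field; lra).
    nra. }
  destruct (Hinf (Nat.max K1 K2)) as [i [Hi Hmi]].
  destruct (Hinf i) as [j [Hj Hmj]].
  destruct (Hsmall i ltac:(lia) Hmi) as [Hmass_i HG_i].
  destruct (Hsmall j ltac:(lia) Hmj) as [Hmass_j HG_j].
  pose proof (minimizing_merge_ge M1 M2 m s i j Hmin ltac:(lia)).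
  pose proof (e0_padd_lt (m i) (m j) (proj1 (Hnn i)) (proj2 (Hnn i))
                (proj1 (Hnn j)) (proj2 (Hnn j)) Hmass_i Hmass_j HG_i HG_j).
  lra.
Qed.

End Energy.

Theorem corollary3p2 (s01 s12 s02 G11 G12 G21 G22 M1 M2 : R)
  (hs01 : 0 < s01) (hs12 : 0 < s12) (hs02 : s02 = s01 + s12)
  (hG11 : 0 <= G11) (hG12 : 0 <= G12) (hG21 : 0 <= G21) (hG22 : 0 <= G22)
  (hGsym : G12 = G21) (hM1 : 0 < M1) (hM2 : 0 < M2)
  (m : nat -> R * R) (s : R) :
  minimizing s01 s12 G11 G12 G21 G22 M1 M2 m s ->
  exists N : nat,
    (forall k : nat, (N < k)%nat -> m k = (0, 0)) /\
    s = sum_f_R0 (fun k => e0 s01 s12 G11 G12 G21 G22 (m k)) N.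
Proof.
  intros Hmin.
  destruct (minimizing_finite_support s01 s12 G11 G12 G21 G22 hs01 (Rlt_le _ _ hs12)
              hG11 hG12 hG21 hG22 M1 M2 m s Hmin) as [N HN].
  exists N; split; [exact HN|].
  destruct Hmin as [_ [He _]].
  apply (uniqueness_sum _ _ _ He), infinite_sum_finite_support.
  intros k Hk; rewrite (HN k Hk); apply e0_zero.
Qed.
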